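(* For real numbers $t_1,t_2,t_3$, let $$\rho^{(1)}_{AB}=\tfrac19\,\mathbb{1}_3\otimes\mathbb{1}_3+\tfrac14\big(t_1\,\lambda_1\otimes\lambda_1+t_2\,\lambda_2\otimes\lambda_2+t_3\,\lambda_3\otimes\lambda_3\big),$$ and assume $\rho^{(1)}_{AB}$ is positive semidefinite (a quantum state). Then $\rho^{(1)}_{AB}$ is separable if and only if $|t_1|+|t_2|+|t_3|\le\frac49$. Moreover, when $|t_1|+|t_2|+|t_3|\le\frac49$, a separable decomposition is obtained as follows. Choose real $\alpha_\mu,\beta_\mu$ with $\alpha_\mu\beta_\mu=t_\mu$ and $\sum_\mu\alpha_\mu^2\le\frac49$, $\sum_\mu\beta_\mu^2\le\frac49$. With the sign patterns $$\vec\epsilon^{(1)}=(1,-1,-1),\quad\vec\epsilon^{(2)}=(-1,-1,1),\quad\vec\epsilon^{(3)}=(-1,1,-1),\quad\vec\epsilon^{(4)}=(1,1,1),$$ one has $$\rho^{(1)}_{AB}=\sum_{i=1}^4\tfrac14\Big(\tfrac13\mathbb{1}+\tfrac12\sum_{\mu=1}^3\epsilon^{(i)}_\mu\alpha_\mu\lambda_\mu\Big)\otimes\Big(\tfrac13\mathbb{1}+\tfrac12\sum_{\mu=1}^3\epsilon^{(i)}_\mu\beta_\mu\lambda_\mu\Big),$$ where each factor is a density matrix.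
   Context: With $\{|1\rangle,|2\rangle,|3\rangle\}$ the standard basis of $\mathbb{C}^3$, the Gell-Mann matrices used here are: - $\lambda_1=|1\rangle\langle2|+|2\rangle\langle1|$, - $\lambda_2=-i|1\rangle\langle2|+i|2\rangle\langle1|$, - $\lambda_3=|1\rangle\langle1|-|2\rangle\langle2|$. A state is separable if it is a convex combination of tensor products of density matrices. *)

From HB Require Import structures.
From mathcomp Require Import all_boot all_order all_algebra.
Set Implicit Arguments. Unset Strict Implicit. Unset Printing Implicit Defensive.
Import Order.TTheory GRing.Theory Num.Theory.
Local Open Scope ring_scope.

(* Row/column index k of C^m (x) C^n is split as (k %/ n, k %% n): standard
   (row-major) Kronecker convention |i>|j> <-> index i*n + j. *)
Lemma kidx1_proof m n (k : 'I_(m * n)) : (k %/ n < m)%N.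
Proof.
case: n k => [|n] k; first by case: k => k /=; rewrite muln0 ltn0.
by rewrite ltn_divLR // mulnC.
Qed.

Lemma kidx2_proof m n (k : 'I_(m * n)) : (k %% n < n)%N.
Proof.
case: n k => [|n] k; first by case: k => k /=; rewrite muln0 ltn0.
by rewrite ltn_mod.
Qed.

Definition kidx1 m n (k : 'I_(m * n)) : 'I_m := Ordinal (kidx1_proof k).
Definition kidx2 m n (k : 'I_(m * n)) : 'I_n := Ordinal (kidx2_proof k).

Definition kron (R : pzRingType) m1 n1 m2 n2
  (A : 'M[R]_(m1, n1)) (B : 'M[R]_(m2, n2)) : 'M[R]_(m1 * m2, n1 * n2) :=
  \matrix_(i, j) (A (kidx1 i) (kidx1 j) * B (kidx2 i) (kidx2 j)).

Section Quantum.
Variable C : numClosedFieldType.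

Definition adjmx m n (A : 'M[C]_(m, n)) : 'M[C]_(n, m) :=
  \matrix_(i, j) (A j i)^*.

Definition psdmx n (A : 'M[C]_n) : Prop :=
  adjmx A = A /\ forall x : 'cV[C]_n, 0 <= (adjmx x *m A *m x) 0 0.

Definition density n (A : 'M[C]_n) : Prop := psdmx A /\ \tr A = 1.

Definition separable m n (rho : 'M[C]_(m * n)) : Prop :=
  exists (k : nat) (p : 'I_k -> C) (A : 'I_k -> 'M[C]_m) (B : 'I_k -> 'M[C]_n),
    (forall i, 0 <= p i) /\ \sum_(i < k) p i = 1 /\
    (forall i, density (A i) /\ density (B i)) /\
    rho = \sum_(i < k) p i *: kron (A i) (B i).

(* Gell-Mann matrices lambda_1, lambda_2, lambda_3 (indices 0,1,2);
   basis |1>,|2>,|3> are indices 0,1,2. *)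
Definition gellmann (mu : 'I_3) : 'M[C]_3 :=
  match val mu with
  | 0%N => delta_mx 0 1 + delta_mx 1 0
  | 1%N => (- 'i) *: delta_mx 0 1 + 'i *: delta_mx 1 0
  | _ => delta_mx 0 0 - delta_mx 1 1
  end.

Definition rho1 (t : 'I_3 -> C) : 'M[C]_(3 * 3) :=
  (9%:R)^-1 *: kron (1%:M : 'M[C]_3) (1%:M : 'M[C]_3)
  + (4%:R)^-1 *: \sum_(mu < 3) t mu *: kron (gellmann mu) (gellmann mu).

(* sign patterns eps^(1..4) (indices 0..3) *)
Definition eps (i : 'I_4) (mu : 'I_3) : C :=
  match val i, val mu with
  | 0%N, 0%N => 1 | 0%N, _ => -1
  | 1%N, 2%N => 1 | 1%N, _ => -1
  | 2%N, 1%N => 1 | 2%N, _ => -1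
  | _, _ => 1
  end.

Definition factor (a : 'I_3 -> C) (i : 'I_4) : 'M[C]_3 :=
  (3%:R)^-1 *: 1%:M + (2%:R)^-1 *: \sum_(mu < 3) (eps i mu * a mu) *: gellmann mu.

End Quantum.

From HB Require Import structures.
From mathcomp Require Import all_boot all_order all_algebra.
From mathcomp Require Import ring.
Set Implicit Arguments.
Unset Strict Implicit.
Unset Printing Implicit Defensive.

Import Order.TTheory GRing.Theory Num.Theory.
Local Open Scope ring_scope.

(* Necessity: on span{|1>,|2>} the matrices lambda_1, lambda_2, lambda_3 are the
   Pauli matrices, so the upper-left 2x2 block of a positive semidefinite A has a Bloch
   vector (Tr (lambda_mu A))_mu of length at most its trace.  By Cauchy-Schwarz the
   functional M |-> Tr (W M), W = P (x) P - sum_mu s_mu lambda_mu (x) lambda_mu with P the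
   projection onto that block and s_mu = +-1, is then nonnegative on product states, hence
   on separable ones; its value on rho is 4/9 - sum_mu s_mu t_mu, and s_mu = sign t_mu
   gives the bound.
   Sufficiency: 1/3 + 1/2 sum_mu c_mu lambda_mu is a density matrix whenever
   sum_mu c_mu^2 <= 4/9, and alpha_mu = sqrt |t_mu|, beta_mu = sign(t_mu) sqrt |t_mu|
   meet the constraints of the explicit decomposition. *)

Definition o0 : 'I_3 := @Ordinal 3 0 isT.
Definition o1 : 'I_3 := @Ordinal 3 1 isT.
Definition o2 : 'I_3 := @Ordinal 3 2 isT.

Lemma sum_ord3 (V : nmodType) (F : 'I_3 -> V) : \sum_(i < 3) F i = F o0 + F o1 + F o2.
Proof. by rewrite !big_ord_recr big_ord0 /= add0r; congr (F _ + F _ + F _); apply: val_inj. Qed.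

Lemma ord3_ind (P : 'I_3 -> Prop) : P o0 -> P o1 -> P o2 -> forall mu, P mu.
Proof.
by move=> P0 P1 P2 [[|[|[|//]]] lt_mu_3]; [move: P0 | move: P1 | move: P2];
  congr P; apply: val_inj.
Qed.

Lemma sum_ord4 (V : nmodType) (F : 'I_4 -> V) : \sum_(i < 4) F i =
  F (@Ordinal 4 0 isT) + F (@Ordinal 4 1 isT) + F (@Ordinal 4 2 isT) + F (@Ordinal 4 3 isT).
Proof.
by rewrite !big_ord_recr big_ord0 /= add0r; congr (F _ + F _ + F _ + F _); apply: val_inj.
Qed.

Lemma kpair_subproof m n (i : 'I_m) (j : 'I_n) : (i * n + j < m * n)%N.
Proof.
by rewrite -ltn_subRL -mulnBl (leq_trans (ltn_ord j)) // leq_pmull // subn_gt0.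
Qed.

Definition kpair m n (i : 'I_m) (j : 'I_n) : 'I_(m * n) := Ordinal (kpair_subproof i j).

Lemma kidx1_kpair m n (i : 'I_m) (j : 'I_n) : kidx1 (kpair i j) = i.
Proof. by apply: val_inj; rewrite /= divnMDl ?divn_small ?addn0 // (leq_ltn_trans _ (ltn_ord j)). Qed.

Lemma kidx2_kpair m n (i : 'I_m) (j : 'I_n) : kidx2 (kpair i j) = j.
Proof. by apply: val_inj; rewrite /= modnMDl modn_small. Qed.

Lemma kron_kpair (R : pzRingType) m1 n1 m2 n2 (A : 'M[R]_(m1, n1)) (B : 'M[R]_(m2, n2))
  i j k l : kron A B (kpair i k) (kpair j l) = A i j * B k l.
Proof. by rewrite mxE !kidx1_kpair !kidx2_kpair. Qed.

Lemma sum_mul_le_of_sqr (R : numDomainType) n (x y : 'I_n -> R) (a b : R) :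
  0 <= a -> 0 <= b -> (forall i, x i \is Num.real) -> (forall i, y i \is Num.real) ->
  \sum_i x i ^+ 2 <= a ^+ 2 -> \sum_i y i ^+ 2 <= b ^+ 2 ->
  \sum_i x i * y i <= a * b.
Proof.
move=> a0 b0 xr yr hx hy.
have sqr_ge0 (z : 'I_n -> R) i : z i \is Num.real -> 0 <= z i ^+ 2.
  by move=> zr; apply: real_exprn_even_ge0.
have vanish (z w : 'I_n -> R) : (forall i, z i \is Num.real) ->
    \sum_i z i ^+ 2 <= 0 -> \sum_i z i * w i = 0.
  move=> zr hz; apply: big1 => i _.
  have /eqP/psumr_eq0P z0 : \sum_i z i ^+ 2 == 0.
    by rewrite eq_le hz sumr_ge0 // => j _; apply: sqr_ge0.
  move/eqP: (z0 (fun j _ => sqr_ge0 z j (zr j)) i isT).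
  by rewrite sqrf_eq0 => /eqP ->; rewrite mul0r.
move: a0 b0; rewrite !le0r => /orP[/eqP a_eq0 | a_gt0]; first by
  move: hx; rewrite a_eq0 expr0n /= mul0r => /(vanish x y xr) ->.
move=> /orP[/eqP b_eq0 | b_gt0].
  move: hy; rewrite b_eq0 expr0n /= mulr0 => /(vanish y x yr).
  by rewrite (eq_bigr _ (fun i _ => mulrC (y i) (x i))) => ->.
have ar : a \is Num.real by apply/gtr0_real.
have br : b \is Num.real by apply/gtr0_real.
have expand : \sum_i (b * x i - a * y i) ^+ 2 =
    b ^+ 2 * \sum_i x i ^+ 2 - 2%:R * a * b * \sum_i x i * y i + a ^+ 2 * \sum_i y i ^+ 2.
  rewrite !mulr_sumr -sumrB -big_split /=; apply: eq_bigr => i _; ring.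
rewrite -subr_ge0 -(pmulr_rge0 _ (mulr_gt0 (mulr_gt0 (ltr0n R 2) a_gt0) b_gt0)).
have -> : 2%:R * a * b * (a * b - \sum_i x i * y i) = b ^+ 2 * (a ^+ 2 - \sum_i x i ^+ 2)
    + a ^+ 2 * (b ^+ 2 - \sum_i y i ^+ 2) + \sum_i (b * x i - a * y i) ^+ 2.
  by rewrite expand; ring.
apply: addr_ge0; first apply: addr_ge0.
- by rewrite mulr_ge0 ?subr_ge0 ?real_exprn_even_ge0.
- by rewrite mulr_ge0 ?subr_ge0 ?real_exprn_even_ge0.
- by apply: sumr_ge0 => i _; rewrite real_exprn_even_ge0 // rpredB ?rpredM.
Qed.

Section Qutrit.
Variable C : numClosedFieldType.

Lemma adjmx_quadE n (M : 'M[C]_n) (x : 'cV[C]_n) :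
  (adjmx x *m M *m x) 0 0 = \sum_j \sum_k (x k 0)^* * M k j * x j 0.
Proof.
rewrite !mxE; apply: eq_bigr => j _; rewrite !mxE mulr_suml.
by apply: eq_bigr => k _; rewrite !mxE.
Qed.

Lemma psd_pair_form n (A : 'M[C]_n) (i j : 'I_n) (u v : C) : i != j -> psdmx A ->
  0 <= u^* * A i i * u + u^* * A i j * v + v^* * A j i * u + v^* * A j j * v.
Proof.
pose x := \col_k (if k == i then u else if k == j then v else 0) : 'cV[C]_n.
move=> ij [_ /(_ x)]; congr (_ <= _); rewrite adjmx_quadE.
have sum_ij (F : 'I_n -> C) : (forall k, k != i -> k != j -> F k = 0) ->
    \sum_k F k = F i + F j.
  move=> F0; rewrite (bigD1 i) // (bigD1 j) 1?eq_sym //= big1 ?addr0 // => k /andP[ki kj].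
  exact: F0.
have xE k : k != i -> k != j -> x k 0 = 0.
  by move=> ki kj; rewrite mxE (negPf ki) (negPf kj).
rewrite sum_ij => [|k ki kj]; last by rewrite big1 // => l _; rewrite (xE k) // mulr0.
rewrite !sum_ij => [|k ki kj|k ki kj]; try by rewrite (xE k) // conjC0 !mul0r.
by rewrite !mxE eqxx eq_sym (negPf ij) eqxx; ring.
Qed.

Lemma psd_minor2 n (A : 'M[C]_n) (i j : 'I_n) : i != j -> psdmx A ->
  [/\ 0 <= A i i, 0 <= A j j, A j i = (A i j)^* & A i j * A j i <= A i i * A j j].
Proof.
move=> ij hA; have Q u v := psd_pair_form u v ij hA.
have hc : A j i = (A i j)^* by case: hA => /matrixP /(_ i j); rewrite mxE => <-; rewrite conjCK.
have a0 : 0 <= A i i.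
  by have := Q 1 0; rewrite conjC0 conjC1 !(mul0r, mulr0, addr0, mul1r, mulr1).
have d0 : 0 <= A j j.
  by have := Q 0 1; rewrite conjC0 conjC1 !(mul0r, mulr0, add0r, mul1r, mulr1).
split=> //; rewrite hc in Q *; move: (A i i) (A j j) (A i j) a0 d0 Q => a d w a0 d0 Q.
have ar : a^* = a by apply/CrealP/ger0_real.
have dr : d^* = d by apply/CrealP/ger0_real.
rewrite -subr_ge0; set N := w * w^*.
have [a_gt0|] := boolP (0 < a).
  have := Q (- w) a; rewrite -(pmulr_rge0 _ a_gt0).
  by congr (_ <= _); rewrite rmorphN ar /N; ring.
rewrite lt_def a0 andbT negbK => /eqP a_eq0.
have [d_gt0|] := boolP (0 < d).
  have := Q d (- w^*); rewrite -(pmulr_rge0 _ d_gt0).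
  by congr (_ <= _); rewrite rmorphN /= conjCK dr /N; ring.
rewrite lt_def d0 andbT negbK => /eqP d_eq0.
have := Q 1 (- w^*); rewrite rmorphN /= conjCK conjC1 a_eq0 d_eq0.
rewrite !(mul0r, mulr0, mul1r, mulr1, add0r, addr0, subr0, sub0r) -/N => hN.
by move: hN; rewrite (_ : _ + _ = 2%:R * - N) ?pmulr_rge0 ?ltr0n // /N; ring.
Qed.

Definition pauli_coord (A : 'M[C]_3) (mu : 'I_3) : C := \tr (gellmann C mu *m A).

Lemma pauli_coordE (A : 'M[C]_3) :
  [/\ pauli_coord A o0 = A o0 o1 + A o1 o0,
      pauli_coord A o1 = 'i * (A o0 o1 - A o1 o0) &
      pauli_coord A o2 = A o0 o0 - A o1 o1].
Proof.
by split; rewrite /pauli_coord /mxtrace sum_ord3 !mxE !sum_ord3 !mxE /gellmann /=; ring.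
Qed.

Lemma psd_pauli_ball (A : 'M[C]_3) : psdmx A ->
  [/\ 0 <= A o0 o0 + A o1 o1, forall mu, pauli_coord A mu \is Num.real &
      \sum_mu pauli_coord A mu ^+ 2 <= (A o0 o0 + A o1 o1) ^+ 2].
Proof.
case/(psd_minor2 (i := o0) (j := o1) isT) => p0 q0 hc hdet.
have [E0 E1 E2] := pauli_coordE A; rewrite hc in E0 E1 hdet.
split; first exact: addr_ge0.
  apply: ord3_ind; rewrite ?E0 ?E1 ?E2.
  - by apply/CrealP; rewrite rmorphD /= conjCK addrC.
  - by apply/CrealP; rewrite rmorphM rmorphB /= conjCK conjCi mulNr -mulrN opprB.
  - by rewrite rpredB ?ger0_real.
rewrite sum_ord3 E0 E1 E2 -subr_ge0.
set p := A o0 o0; set q := A o1 o1; set w := A o0 o1.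
have -> : (p + q) ^+ 2 - ((w + w^*) ^+ 2 + ('i * (w - w^*)) ^+ 2 + (p - q) ^+ 2) =
    4%:R * (p * q - w * w^*) - ('i ^+ 2 + 1) * (w - w^*) ^+ 2 by ring.
by rewrite sqrCi addNr mul0r subr0 mulr_ge0 ?ler0n // subr_ge0.
Qed.

(* M |-> Tr (W M) for W = P (x) P - sum_mu s_mu lambda_mu (x) lambda_mu, written out on the
   entries of the block span{|1>,|2>} (x) span{|1>,|2>}. *)
Definition qubit_witness (s : 'I_3 -> C) (M : 'M[C]_(3 * 3)) : C :=
  let m i j k l := M (kpair i j) (kpair k l) in
  m o0 o0 o0 o0 + m o0 o1 o0 o1 + m o1 o0 o1 o0 + m o1 o1 o1 o1
  - s o0 * (m o0 o0 o1 o1 + m o0 o1 o1 o0 + m o1 o0 o0 o1 + m o1 o1 o0 o0)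
  + s o1 * (m o0 o0 o1 o1 - m o0 o1 o1 o0 - m o1 o0 o0 o1 + m o1 o1 o0 o0)
  - s o2 * (m o0 o0 o0 o0 - m o0 o1 o0 o1 - m o1 o0 o1 o0 + m o1 o1 o1 o1).

Lemma qubit_witness_kron (s : 'I_3 -> C) (A B : 'M[C]_3) :
  qubit_witness s (kron A B) = (A o0 o0 + A o1 o1) * (B o0 o0 + B o1 o1)
    - \sum_mu s mu * pauli_coord A mu * pauli_coord B mu.
Proof.
have mul_i2 x y : 'i * x * ('i * y) = - (x * y) :> C.
  by rewrite mulrACA -expr2 sqrCi mulN1r.
rewrite /qubit_witness !kron_kpair sum_ord3.
have [-> -> ->] := pauli_coordE A; have [-> -> ->] := pauli_coordE B.
by rewrite -[s o1 * _ * _]mulrA mul_i2; ring.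
Qed.

Lemma qubit_witness_kron_ge0 (s : 'I_3 -> C) (A B : 'M[C]_3) :
  (forall mu, s mu \is Num.real) -> (forall mu, s mu ^+ 2 = 1) ->
  psdmx A -> psdmx B -> 0 <= qubit_witness s (kron A B).
Proof.
move=> sr s2 /psd_pauli_ball[a0 ar aball] /psd_pauli_ball[b0 br bball].
rewrite qubit_witness_kron subr_ge0.
apply: sum_mul_le_of_sqr => // [mu|]; first by rewrite rpredM.
by under eq_bigr do rewrite exprMn s2 mul1r.
Qed.

Lemma qubit_witness_lincomb (s : 'I_3 -> C) k (p : 'I_k -> C) (K : 'I_k -> 'M[C]_(3 * 3)) :
  qubit_witness s (\sum_(i < k) p i *: K i) = \sum_(i < k) p i * qubit_witness s (K i).
Proof.
have W0 : qubit_witness s 0 = 0 by rewrite /qubit_witness !mxE; ring.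
have WD : {morph qubit_witness s : A B / A + B} by move=> A B; rewrite /qubit_witness !mxE; ring.
rewrite (big_morph _ WD W0); apply: eq_bigr => i _.
by rewrite /qubit_witness !mxE; ring.
Qed.

Lemma rho1E (t : 'I_3 -> C) k l : rho1 t k l =
  9%:R^-1 * ((kidx1 k == kidx1 l)%:R * (kidx2 k == kidx2 l)%:R)
  + 4%:R^-1 * \sum_mu t mu * (gellmann C mu (kidx1 k) (kidx1 l) * gellmann C mu (kidx2 k) (kidx2 l)).
Proof. by rewrite !mxE summxE; under eq_bigr do rewrite !mxE. Qed.

Lemma qubit_witness_rho1 (s t : 'I_3 -> C) :
  qubit_witness s (rho1 t) = 4%:R / 9%:R - \sum_mu s mu * t mu.
Proof.
rewrite /qubit_witness !rho1E !kidx1_kpair !kidx2_kpair !sum_ord3 /gellmann /= !mxE /=.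
rewrite !(mulr0, mulr1, addr0, add0r, subr0, sub0r, mul0r, mul1r, mulrNN, mulrN, mulNr).
by rewrite -expr2 sqrCi; field.
Qed.

Definition gellmann_state (c : 'I_3 -> C) : 'M[C]_3 :=
  3%:R^-1 *: 1%:M + 2%:R^-1 *: \sum_(mu < 3) c mu *: gellmann C mu.

Lemma gellmann_stateE (c : 'I_3 -> C) p q : gellmann_state c p q =
  3%:R^-1 * (p == q)%:R
  + 2%:R^-1 * (c o0 * gellmann C o0 p q + c o1 * gellmann C o1 p q + c o2 * gellmann C o2 p q).
Proof. by rewrite !mxE summxE sum_ord3 !mxE. Qed.

Lemma mxtrace_gellmann_state (c : 'I_3 -> C) : \tr (gellmann_state c) = 1.
Proof. by rewrite /mxtrace sum_ord3 !gellmann_stateE /gellmann /= !mxE /=; field. Qed.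

Lemma adjmx_gellmann_state (c : 'I_3 -> C) :
  (forall mu, c mu \is Num.real) -> adjmx (gellmann_state c) = gellmann_state c.
Proof.
move=> cr; apply/matrixP => p q; rewrite [LHS]mxE !gellmann_stateE.
rewrite !(rmorphD, rmorphM, fmorphV, conjC_nat) /= !(conj_Creal (cr _)).
by elim/ord3_ind: p; elim/ord3_ind: q;
  rewrite /gellmann /= !mxE /= ?(rmorphD, rmorphM, rmorphN, rmorph0, rmorph1) /= ?conjCi;
  field.
Qed.

Lemma hermitian2_form_ge0 (p s q u v : C) :
  0 <= p -> 0 <= s -> q * q^* <= p * s ->
  0 <= p * (u^* * u) + s * (v^* * v) + u^* * q * v + v^* * q^* * u.
Proof.
move=> p0 s0 hq; have pr : p^* = p by apply/CrealP/ger0_real.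
move: p0; rewrite le0r => /orP[/eqP p_eq0 | p_gt0].
  have : q * q^* == 0 by move: hq; rewrite eq_le mul_conjC_ge0 andbT p_eq0 mul0r.
  rewrite mul_conjC_eq0 p_eq0 => /eqP ->.
  by rewrite conjC0 !(mul0r, mulr0, add0r, addr0) mulr_ge0 // mulrC mul_conjC_ge0.
rewrite -(pmulr_rge0 _ p_gt0).
have -> : p * (p * (u^* * u) + s * (v^* * v) + u^* * q * v + v^* * q^* * u) =
    (p * u + q * v) * (p * u + q * v)^* + (p * s - q * q^*) * (v * v^*).
  by rewrite rmorphD !rmorphM /= pr; ring.
by rewrite addr_ge0 ?mul_conjC_ge0 // mulr_ge0 ?mul_conjC_ge0 ?subr_ge0.
Qed.

Lemma psd_gellmann_state (c : 'I_3 -> C) : (forall mu, c mu \is Num.real) ->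
  \sum_(mu < 3) c mu ^+ 2 <= 4%:R / 9%:R -> psdmx (gellmann_state c).
Proof.
move=> cr; rewrite sum_ord3 => hc; split; first exact: adjmx_gellmann_state.
have c2_ge0 mu : 0 <= c mu ^+ 2 by apply: real_exprn_even_ge0.
have c2_le : c o2 ^+ 2 <= (2%:R / 3%:R) ^+ 2.
  rewrite (_ : (2%:R / 3%:R) ^+ 2 = 4%:R / 9%:R :> C); last by field.
  by apply: le_trans hc; rewrite lerDr addr_ge0.
have /andP[c2_lb c2_ub] : - (2%:R / 3%:R) <= c o2 <= 2%:R / 3%:R.
  by rewrite -real_ler_norml // -(ler_pXn2r (n := 2)) ?nnegrE ?divr_ge0 // real_normK.
move=> x; rewrite adjmx_quadE !sum_ord3 !gellmann_stateE /gellmann /= !mxE /=.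
set u := x o0 0; set v := x o1 0; set w := x o2 0.
pose p := 3%:R^-1 + 2%:R^-1 * c o2; pose s := 3%:R^-1 - 2%:R^-1 * c o2.
pose q := 2%:R^-1 * (c o0 - 'i * c o1).
have qc : q^* = 2%:R^-1 * (c o0 + 'i * c o1).
  rewrite rmorphM fmorphV rmorph_nat rmorphB /= rmorphM /= conjCi.
  by rewrite (conj_Creal (cr o0)) (conj_Creal (cr o1)) mulNr opprK.
(* the form splits into the block on |1>,|2> and the positive term on |3> *)
suff : 0 <= p * (u^* * u) + s * (v^* * v) + u^* * q * v + v^* * q^* * u
    + 3%:R^-1 * (w^* * w) by congr (_ <= _); rewrite qc /p /s /q; ring.
apply: addr_ge0; last by rewrite mulr_ge0 ?invr_ge0 ?ler0n // mulrC mul_conjC_ge0.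
apply: hermitian2_form_ge0.
- rewrite /p (_ : _ + _ = 2%:R^-1 * (c o2 - - (2%:R / 3%:R))); last by field.
  by rewrite mulr_ge0 ?invr_ge0 ?ler0n // subr_ge0.
- rewrite /s (_ : _ - _ = 2%:R^-1 * (2%:R / 3%:R - c o2)); last by field.
  by rewrite mulr_ge0 ?invr_ge0 ?ler0n // subr_ge0.
- rewrite qc -subr_ge0.
  have -> : p * s - q * (2%:R^-1 * (c o0 + 'i * c o1)) =
      4%:R^-1 * (4%:R / 9%:R - (c o0 ^+ 2 + c o1 ^+ 2 + c o2 ^+ 2))
      + 4%:R^-1 * c o1 ^+ 2 * ('i ^+ 2 + 1) by rewrite /p /s /q; field.
  by rewrite sqrCi addNr mulr0 addr0 mulr_ge0 ?invr_ge0 ?ler0n // subr_ge0.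
Qed.

Lemma eps_sign (i : 'I_4) (mu : 'I_3) : eps C i mu = 1 \/ eps C i mu = -1.
Proof.
by case: i => [[|[|[|[|//]]]] ?]; case: mu => [[|[|[|//]]] ?]; by [left | right].
Qed.

Lemma factorE (a : 'I_3 -> C) i : factor a i = gellmann_state (fun mu => eps C i mu * a mu).
Proof. by []. Qed.

Lemma density_factor (a : 'I_3 -> C) i : (forall mu, a mu \is Num.real) ->
  \sum_(mu < 3) a mu ^+ 2 <= 4%:R / 9%:R -> density (factor a i).
Proof.
move=> ar ha; rewrite factorE; split; last exact: mxtrace_gellmann_state.
apply: psd_gellmann_state => [mu|].
  by rewrite rpredM //; case: (eps_sign i mu) => ->; rewrite ?rpredN real1.
have eps2 mu : eps C i mu ^+ 2 = 1 by case: (eps_sign i mu) => ->; rewrite ?sqrrN expr1n.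
by under eq_bigr do rewrite exprMn eps2 mul1r.
Qed.

(* The four sign patterns are orthogonal and each coordinate sums to zero over them. *)
Lemma rho1_decomposition (t alpha beta : 'I_3 -> C) :
  (forall mu, alpha mu * beta mu = t mu) ->
  rho1 t = \sum_(i < 4) 4%:R^-1 *: kron (factor alpha i) (factor beta i).
Proof.
move=> hab; apply/matrixP => k l; rewrite rho1E summxE.
under eq_bigr do rewrite -hab.
under [RHS]eq_bigr do rewrite !factorE mxE mxE !gellmann_stateE.
rewrite sum_ord4 sum_ord3 /eps /=; move: (gellmann C) => G.
by field.
Qed.

Lemma separable_rho1_sum_norm_le (t : 'I_3 -> C) : (forall mu, t mu \is Num.real) ->
  separable (rho1 t) -> \sum_(mu < 3) `|t mu| <= 4%:R / 9%:R.
Proof.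
move=> tr [k [p [A [B [p_ge0 [_ [dAB rhoE]]]]]]].
pose s mu : C := (-1) ^+ (t mu < 0)%R.
have := qubit_witness_rho1 s t; rewrite rhoE qubit_witness_lincomb => witnessE.
have : 0 <= 4%:R / 9%:R - \sum_mu s mu * t mu.
  rewrite -witnessE sumr_ge0 // => i _; rewrite mulr_ge0 //.
  have [[psdA _] [psdB _]] := dAB i.
  by apply: qubit_witness_kron_ge0 => // mu; rewrite ?sqrr_sign // rpredX ?rpredN ?real1.
by rewrite subr_ge0 (eq_bigr _ (fun mu _ => real_normrEsign (tr mu))).
Qed.

Lemma separable_rho1 (t : 'I_3 -> C) : (forall mu, t mu \is Num.real) ->
  \sum_(mu < 3) `|t mu| <= 4%:R / 9%:R -> separable (rho1 t).
Proof.
move=> tr ht.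
pose alpha mu := sqrtC `|t mu|.
pose beta mu := (-1) ^+ (t mu < 0)%R * sqrtC `|t mu|.
have alpha2 mu : alpha mu ^+ 2 = `|t mu| by rewrite sqrtCK.
have beta2 mu : beta mu ^+ 2 = `|t mu| by rewrite exprMn sqrr_sign mul1r sqrtCK.
have alpha_real mu : alpha mu \is Num.real by apply: sqrtC_real.
have beta_real mu : beta mu \is Num.real.
  by rewrite rpredM ?rpredX ?rpredN ?real1 ?sqrtC_real.
have alpha_beta mu : alpha mu * beta mu = t mu.
  by rewrite mulrCA -expr2 alpha2 -realEsign.
exists 4%N, (fun _ => 4%:R^-1), (factor alpha), (factor beta); split.
  by move=> _; rewrite invr_ge0 ler0n.
split; first by rewrite sum_ord4; field.
split; last exact: rho1_decomposition.
by move=> i; split; apply: density_factor => //; under eq_bigr do rewrite ?alpha2 ?beta2.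
Qed.

End Qutrit.

Theorem mainTheorem5 (C : numClosedFieldType) (t : 'I_3 -> C)
  (t_real : forall mu, t mu \is Num.real)
  (rho_state : psdmx (rho1 t)) :
  (separable (rho1 t) <-> \sum_(mu < 3) `|t mu| <= 4%:R / 9%:R) /\
  (\sum_(mu < 3) `|t mu| <= 4%:R / 9%:R ->
   forall alpha beta : 'I_3 -> C,
     (forall mu, alpha mu \is Num.real) -> (forall mu, beta mu \is Num.real) ->
     (forall mu, alpha mu * beta mu = t mu) ->
     \sum_(mu < 3) alpha mu ^+ 2 <= 4%:R / 9%:R ->
     \sum_(mu < 3) beta mu ^+ 2 <= 4%:R / 9%:R ->
     (forall i, density (factor alpha i) /\ density (factor beta i)) /\
     rho1 t = \sum_(i < 4) (4%:R)^-1 *: kron (factor alpha i) (factor beta i)).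
Proof.
split; first by split; [exact: separable_rho1_sum_norm_le | exact: separable_rho1].
move=> _ alpha beta alpha_real beta_real alpha_beta alpha2 beta2.
split; last exact: rho1_decomposition.
by move=> i; split; exact: density_factor.
Qed.
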